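(* (1) If $\Psi \vdash \exists \alpha{:}\kappa.\,A \le^{+} B$ then $\Psi, \alpha{:}\kappa \vdash A \le^{+} B$. (2) If $\Psi \vdash A \le^{-} \forall \beta{:}\kappa.\,B$ then $\Psi, \beta{:}\kappa \vdash A \le^{-} B$.
   Context: Sorts are $\kappa \in \{\mathsf{type}, \mathbb{N}\}$. Index terms/monotypes $\tau, t$ are built from $\mathbf{1}$, universal variables $\alpha$, binary connectives $\tau_1 \oplus \tau_2$ with $\oplus \in \{\to, +, \times\}$ (sort $\mathsf{type}$), and $\mathsf{zero}$, $\mathsf{succ}(t)$ (sort $\mathbb{N}$); $\Psi \vdash t : \kappa$ means $t$ has sort $\kappa$ with its variables declared in $\Psi$. Types are $A, B ::= \mathbf{1} \mid \alpha \mid A \oplus B \mid \forall \alpha{:}\kappa.\,A \mid \exists \alpha{:}\kappa.\,A \mid P \supset A \mid A \wedge P \mid \mathsf{Vec}\ t\ A$ with propositions $P ::= t = t'$. A declarative context $\Psi$ is a list of declarations including universal variables $\alpha:\kappa$ (bound variables are assumed fresh for $\Psi$). A type is positive if headed by $\exists$, negative if headed by $\forall$; nonpos = not positive, nonneg = not negative. Declarative subtyping $\Psi \vdash A \le^{\pm} B$ is inductively defined by: (Refl) if $\Psi \vdash A\ \mathsf{type}$ and $A$ is nonpos and nonneg then $\Psi \vdash A \le^{\pm} A$; ($\forall$L) $\Psi \vdash \tau : \kappa$ and $\Psi \vdash [\tau/\alpha]A \le^- B$ give $\Psi \vdash \forall\alpha{:}\kappa.A \le^- B$; ($\forall$R)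 $\Psi, \beta{:}\kappa \vdash A \le^- B$ gives $\Psi \vdash A \le^- \forall\beta{:}\kappa.B$; ($\exists$L) $\Psi, \alpha{:}\kappa \vdash A \le^+ B$ gives $\Psi \vdash \exists\alpha{:}\kappa.A \le^+ B$; ($\exists$R) $\Psi \vdash \tau:\kappa$ and $\Psi \vdash A \le^+ [\tau/\beta]B$ give $\Psi \vdash A \le^+ \exists\beta{:}\kappa.B$; ($-{+}$) $\Psi \vdash A \le^- B$ with $A,B$ nonpos gives $\Psi \vdash A \le^+ B$; ($+{-}$) $\Psi \vdash A \le^+ B$ with $A,B$ nonneg gives $\Psi \vdash A \le^- B$. *)

From Stdlib Require Import List Arith.
Import ListNotations.

Inductive sort : Type := SType | SNat.

Inductive binop : Type := BArrow | BSum | BProd.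

(* One syntactic category for index terms / monotypes and types.
   Universal variables are de Bruijn indices (0 = most recently declared
   universal variable of the context). *)
Inductive tm : Type :=
| TUnit : tm
| TVar : nat -> tm
| TBin : binop -> tm -> tm -> tm
| TZero : tm
| TSucc : tm -> tm
| TAll : sort -> tm -> tm
| TEx : sort -> tm -> tm
| TImp : (tm * tm) -> tm -> tm       (* (t = t') ⊃ A *)
| TAnd : tm -> (tm * tm) -> tm       (* A ∧ (t = t') *)
| TVec : tm -> tm -> tm.

Fixpoint lift (d c : nat) (t : tm) : tm :=
  match t with
  | TUnit => TUnit
  | TVar n => if c <=? n then TVar (n + d) else TVar n
  | TBin o a b => TBin o (lift d c a) (lift d c b)
  | TZero => TZero
  | TSucc a => TSucc (lift d c a)
  | TAll k a => TAll k (lift d (S c) a)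
  | TEx k a => TEx k (lift d (S c) a)
  | TImp (p, q) a => TImp (lift d c p, lift d c q) (lift d c a)
  | TAnd a (p, q) => TAnd (lift d c a) (lift d c p, lift d c q)
  | TVec s a => TVec (lift d c s) (lift d c a)
  end.

Definition shift (t : tm) : tm := lift 1 0 t.

Fixpoint subst (k : nat) (s : tm) (t : tm) : tm :=
  match t with
  | TUnit => TUnit
  | TVar n =>
      if n <? k then TVar n
      else if n =? k then lift k 0 s
      else TVar (pred n)
  | TBin o a b => TBin o (subst k s a) (subst k s b)
  | TZero => TZero
  | TSucc a => TSucc (subst k s a)
  | TAll kk a => TAll kk (subst (S k) s a)
  | TEx kk a => TEx kk (subst (S k) s a)
  | TImp (p, q) a => TImp (subst k s p, subst k s q) (subst k s a)
  | TAnd a (p, q) => TAnd (subst k s a) (subst k s p, subst k s q)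
  | TVec u a => TVec (subst k s u) (subst k s a)
  end.

Definition open (tau A : tm) : tm := subst 0 tau A.

(* Declarations: universal variables alpha:kappa, and (for generality)
   term variables x:A.  Newest declaration at the head of the list. *)
Inductive decl : Type :=
| DUniv : sort -> decl
| DTm : tm -> decl.

Definition ctx := list decl.

(* sort of the n-th universal variable (term-variable declarations skipped) *)
Fixpoint lookup (n : nat) (G : ctx) : option sort :=
  match G with
  | [] => None
  | DTm _ :: G' => lookup n G'
  | DUniv k :: G' => match n with 0 => Some k | S m => lookup m G' end
  end.

Inductive sorting (G : ctx) : tm -> sort -> Prop :=
| So_Unit : sorting G TUnit SType
| So_Var : forall n k, lookup n G = Some k -> sorting G (TVar n) k
| So_Bin : forall o a b, sorting G a SType -> sorting G b SType ->
    sorting G (TBin o a b) SType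
| So_Zero : sorting G TZero SNat
| So_Succ : forall t, sorting G t SNat -> sorting G (TSucc t) SNat.

Definition prop_wf (G : ctx) (P : tm * tm) : Prop :=
  sorting G (fst P) SNat /\ sorting G (snd P) SNat.

Inductive wf_type (G : ctx) : tm -> Prop :=
| Wf_Unit : wf_type G TUnit
| Wf_Var : forall n, lookup n G = Some SType -> wf_type G (TVar n)
| Wf_Bin : forall o a b, wf_type G a -> wf_type G b -> wf_type G (TBin o a b)
| Wf_All : forall k a, wf_type (DUniv k :: G) a -> wf_type G (TAll k a)
| Wf_Ex : forall k a, wf_type (DUniv k :: G) a -> wf_type G (TEx k a)
| Wf_Imp : forall P a, prop_wf G P -> wf_type G a -> wf_type G (TImp P a)
| Wf_And : forall a P, wf_type G a -> prop_wf G P -> wf_type G (TAnd a P)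
| Wf_Vec : forall t a, sorting G t SNat -> wf_type G a -> wf_type G (TVec t a).

Definition positive (A : tm) : bool :=
  match A with TEx _ _ => true | _ => false end.
Definition negative (A : tm) : bool :=
  match A with TAll _ _ => true | _ => false end.
Definition nonpos (A : tm) : bool := negb (positive A).
Definition nonneg (A : tm) : bool := negb (negative A).

Inductive polarity : Type := Pos | Neg.

Inductive sub : ctx -> polarity -> tm -> tm -> Prop :=
| Sub_Refl : forall G p A,
    wf_type G A -> nonpos A = true -> nonneg A = true -> sub G p A A
| Sub_AllL : forall G k tau A B,
    sorting G tau k -> sub G Neg (open tau A) B -> sub G Neg (TAll k A) B
| Sub_AllR : forall G k A B,
    sub (DUniv k :: G) Neg (shift A) B -> sub G Neg A (TAll k B)
| Sub_ExL : forall G k A B,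
    sub (DUniv k :: G) Pos A (shift B) -> sub G Pos (TEx k A) B
| Sub_ExR : forall G k tau A B,
    sorting G tau k -> sub G Pos A (open tau B) -> sub G Pos A (TEx k B)
| Sub_NegPos : forall G A B,
    sub G Neg A B -> nonpos A = true -> nonpos B = true -> sub G Pos A B
| Sub_PosNeg : forall G A B,
    sub G Pos A B -> nonneg A = true -> nonneg B = true -> sub G Neg A B.

(* Only two derivations can end in [Psi |- exists a. A <=+ B]:
   an (ExistsL) step, whose premise is the goal, or an (ExistsR) step
   [Psi |- exists a. A <=+ [tau/b]B'].  In the latter case induction gives the goal for
   [[tau/b]B'] and weakening the witness [tau] rebuilds (ExistsR) under the new
   declaration; this needs only that shifting commutes with instantiation.  The rules
   (Refl) and (-+) are excluded because an existential is positive.  The universal case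
   is dual. *)
From Stdlib Require Import List Arith Lia.

(* The derived induction principle of [tm] gives no hypotheses for the index terms of
   the propositions in [TImp] and [TAnd]. *)
Fixpoint tm_deep_ind (P : tm -> Prop)
  (HUnit : P TUnit)
  (HVar : forall n, P (TVar n))
  (HBin : forall o a b, P a -> P b -> P (TBin o a b))
  (HZero : P TZero)
  (HSucc : forall a, P a -> P (TSucc a))
  (HAll : forall kappa a, P a -> P (TAll kappa a))
  (HEx : forall kappa a, P a -> P (TEx kappa a))
  (HImp : forall p q a, P p -> P q -> P a -> P (TImp (p, q) a))
  (HAnd : forall a p q, P a -> P p -> P q -> P (TAnd a (p, q)))
  (HVec : forall s a, P s -> P a -> P (TVec s a))
  (t : tm) {struct t} : P t :=
  let IH := tm_deep_ind P HUnit HVar HBin HZero HSucc HAll HEx HImp HAnd HVec in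
  match t with
  | TUnit => HUnit
  | TVar n => HVar n
  | TBin o a b => HBin o a b (IH a) (IH b)
  | TZero => HZero
  | TSucc a => HSucc a (IH a)
  | TAll k a => HAll k a (IH a)
  | TEx k a => HEx k a (IH a)
  | TImp (p, q) a => HImp p q a (IH p) (IH q) (IH a)
  | TAnd a (p, q) => HAnd a p q (IH a) (IH p) (IH q)
  | TVec s a => HVec s a (IH s) (IH a)
  end.

Ltac simpl_keep_tests := cbn -[Nat.leb Nat.ltb Nat.eqb].

Ltac case_nat_tests :=
  repeat match goal with
  | |- context [?a <=? ?b] => destruct (Nat.leb_spec a b)
  | |- context [?a <? ?b] => destruct (Nat.ltb_spec a b)
  | |- context [?a =? ?b] => destruct (Nat.eqb_spec a b)
  end.

Lemma lift_comm (d k : nat) (s : tm) : forall j c, j <= c ->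
  lift d (c + k) (lift k j s) = lift k j (lift d c s).
Proof.
  induction s using tm_deep_ind; intros j c Hjc; simpl_keep_tests;
    try (rewrite ?IHs, ?IHs1, ?IHs2, ?IHs3 by lia; reflexivity);
    try (f_equal; apply (IHs (S j) (S c)); lia).
  case_nat_tests; simpl_keep_tests; case_nat_tests; f_equal; lia.
Qed.

Lemma lift_subst (s t : tm) : forall k c, k <= c ->
  lift 1 c (subst k s t) = subst k (lift 1 (c - k) s) (lift 1 (S c) t).
Proof.
  induction t using tm_deep_ind; intros k c Hkc; simpl_keep_tests;
    try (rewrite ?IHt, ?IHt1, ?IHt2, ?IHt3 by lia; reflexivity);
    try (f_equal; apply (IHt (S k) (S c)); lia).
  case_nat_tests; simpl_keep_tests; case_nat_tests; try (f_equal; lia).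
  replace c with (c - k + k) at 1 by lia.
  apply lift_comm; lia.
Qed.

Lemma shift_open (tau B : tm) :
  shift (open tau B) = open (shift tau) (lift 1 1 B).
Proof. unfold shift, open. rewrite lift_subst by lia. reflexivity. Qed.

Lemma sorting_shift (G : ctx) (t : tm) (k k' : sort) :
  sorting G t k -> sorting (DUniv k' :: G) (shift t) k.
Proof.
  unfold shift; induction 1; simpl; constructor; auto.
  rewrite Nat.add_1_r. assumption.
Qed.

Lemma sub_ExL_inv (G : ctx) (k : sort) (A B : tm) :
  sub G Pos (TEx k A) B -> sub (DUniv k :: G) Pos A (shift B).
Proof.
  intros H. remember Pos as p eqn:Hp. remember (TEx k A) as E eqn:HE.
  induction H; subst; try discriminate.
  - injection HE as -> ->. assumption.
  - apply Sub_ExR with (tau := shift tau).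
    + apply sorting_shift; assumption.
    + rewrite <- shift_open. auto.
Qed.

Lemma sub_AllR_inv (G : ctx) (k : sort) (A B : tm) :
  sub G Neg A (TAll k B) -> sub (DUniv k :: G) Neg (shift A) B.
Proof.
  intros H. remember Neg as p eqn:Hp. remember (TAll k B) as U eqn:HU.
  induction H; subst; try discriminate.
  - apply Sub_AllL with (tau := shift tau).
    + apply sorting_shift; assumption.
    + rewrite <- shift_open. auto.
  - injection HU as -> ->. assumption.
Qed.

Theorem mainTheorem2 :
  (forall (G : ctx) (k : sort) (A B : tm),
      sub G Pos (TEx k A) B -> sub (cons (DUniv k) G) Pos A (shift B)) /\
  (forall (G : ctx) (k : sort) (A B : tm),
      sub G Neg A (TAll k B) -> sub (cons (DUniv k) G) Neg (shift A) B).
Proof. split; [exact sub_ExL_inv | exact sub_AllR_inv]. Qed.
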